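(* Let $G$ be an $n\times n$ grid with $n$ even. Any initial configuration of $k\ge 3$ robots on distinct nodes of $G$ in which exactly one corner of the minimum enclosing square is occupied is gatherable despite at most one crash fault.
   Context: Model. The grid is the anonymous grid graph. A configuration is a map $f:V(G)\to\{0,1,2\}$ ($0$ empty, $1$ singleton, $2$ multiplicity = at least two robots). Robots are anonymous, identical, oblivious, cannot communicate, share no coordinate system, orientation or chirality, and run the same deterministic algorithm, in Look–Compute–Move cycles: snapshot of the whole configuration (global visibility, weak multiplicity detection), deterministic decision to stay or move to an adjacent node, instantaneous move. Fully asynchronous (finite but unbounded adversarial delays; every non-crashed robot activated infinitely often; moves may use outdated snapshots). At most one robot may crash at an adversarial time: it stops forever, stays visible, indistinguishable. Gatherable despite at most one crash fault: some such algorithm guarantees in every execution with at most one crash that after finite time all non-crashed robots are on one node and remain there. Minimum enclosing square (MES): the smallest square subgrid with the same geometric center as the grid containing all occupied nodes; its corners are its four corner nodes. *)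

From mathcomp Require Import all_boot.
Set Implicit Arguments. Unset Strict Implicit. Unset Printing Implicit Defensive.

Section Grid.
Variable n : nat.

Definition node := ('I_n * 'I_n)%type.

Definition adj (u v : node) : bool :=
  ((u.1 : nat) == v.1) && (((u.2 : nat) == v.2.+1) || ((v.2 : nat) == u.2.+1))
  || ((u.2 : nat) == v.2) && (((u.1 : nat) == v.1.+1) || ((v.1 : nat) == u.1.+1)).

(** A configuration: 0 empty, 1 singleton, 2 multiplicity (>= 2 robots). *)
Definition config := node -> nat.

(** The 8 automorphisms of the grid (no common orientation nor chirality):
    code (s, fx, fy) = optional swap of the axes, then optional reflection
    of each axis. *)
Definition symcode := (bool * bool * bool)%type.
Definition flip (b : bool) (a : 'I_n) : 'I_n := if b then rev_ord a else a.
Definition symf (c : symcode) (v : node) : node :=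
  let: (s, fx, fy) := c in
  let: (a, b) := if s then (v.2, v.1) else (v.1, v.2) in (flip fx a, flip fy b).
Definition sym_inv (c : symcode) : symcode :=
  let: (s, fx, fy) := c in if s then (s, fy, fx) else (s, fx, fy).

Lemma symf_invK c : cancel (symf c) (symf (sym_inv c)).
Proof.
case: c => [[s fx] fy] [a b].
by case: s; case: fx; case: fy; rewrite /= ?rev_ordK.
Qed.

(** An algorithm: deterministic function of the snapshot (expressed in the
    robot's local frame) and of the robot's own (local) position, returning
    the node it wants to move to (in local coordinates). A returned node
    which is neither the current node nor adjacent to it means "stay". *)
Definition algorithm := config -> node -> node.

(** Minimum enclosing square: for even n, the squares of the grid concentric
    with the grid are [d, n-1-d]^2. *)
Definition in_square (d : nat) (v : node) : bool :=
  [&& d <= v.1, (v.1 : nat) <= n.-1 - d, d <= v.2 & (v.2 : nat) <= n.-1 - d].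
Definition encloses (occ : pred node) (d : nat) : Prop :=
  forall v, occ v -> in_square d v.
Definition is_MES (occ : pred node) (d : nat) : Prop :=
  encloses occ d /\ forall d', encloses occ d' -> d' <= d.
Definition is_corner (d : nat) (v : node) : bool :=
  (((v.1 : nat) == d) || ((v.1 : nat) == n.-1 - d)) &&
  (((v.2 : nat) == d) || ((v.2 : nat) == n.-1 - d)).

Section Robots.
Variable k : nat.
Definition robot := 'I_k.

(** Configuration induced by robot positions (weak multiplicity detection). *)
Definition cfg_of (pos : robot -> node) : config :=
  fun v => minn #|[pred i | pos i == v]| 2.

Record state := State {
  pos : robot -> node;
  pend : robot -> option node;   (* move computed at the last Look, not yet executed *)
  crashed : option robot
}.

Definition alive (st : state) (i : robot) : bool := crashed st != Some i.

(** Adversarial events: a Look (snapshot + compute, with an adversarially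
    chosen local frame), a Move (instantaneous move to the node computed at
    the last Look, possibly from an outdated snapshot), or a Crash. *)
Inductive event :=
| Look of robot & symcode
| Move of robot
| Crash of robot.

Definition upd {T : Type} (f : robot -> T) (i : robot) (x : T) : robot -> T :=
  fun j => if j == i then x else f j.

(** Target computed by robot at p: local->global frame map is symf c. *)
Definition target (A : algorithm) (C : config) (p : node) (c : symcode) : node :=
  let t := symf c (A (fun u => C (symf c u)) (symf (sym_inv c) p)) in
  if (t == p) || adj p t then t else p.

Definition step (A : algorithm) (st : state) (e : event) : state :=
  match e with
  | Look i c =>
      if alive st i && (pend st i == None) then
        State (pos st)
              (upd (pend st) i (Some (target A (cfg_of (pos st)) (pos st i) c)))
              (crashed st)
      else st
  | Move i =>
      if alive st i then
        match pend st i with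
        | Some t => State (upd (pos st) i t) (upd (pend st) i None) (crashed st)
        | None => st
        end
      else st
  | Crash i =>
      if crashed st == None then State (pos st) (pend st) (Some i) else st
  end.

Fixpoint run (A : algorithm) (pos0 : robot -> node) (sched : nat -> event)
    (t : nat) : state :=
  match t with
  | 0 => State pos0 (fun _ => None) None
  | t'.+1 => step A (run A pos0 sched t') (sched t')
  end.

Definition fair (A : algorithm) (pos0 : robot -> node) (sched : nat -> event)
    : Prop :=
  forall i, (forall t, alive (run A pos0 sched t) i) ->
  forall N, exists m, N <= m /\ sched m = Move i /\
                      pend (run A pos0 sched m) i <> None.

Definition gathers (A : algorithm) (pos0 : robot -> node) (sched : nat -> event)
    : Prop :=
  exists T (v : node), forall t, T <= t -> forall i,
    alive (run A pos0 sched t) i -> pos (run A pos0 sched t) i = v.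

(** Gatherable despite at most one crash fault (the schedule may contain
    at most one effective Crash, by construction of [step]). *)
Definition gatherable_1crash (pos0 : robot -> node) : Prop :=
  exists A : algorithm, forall sched, fair A pos0 sched -> gathers A pos0 sched.

Definition occupied (pos0 : robot -> node) : pred node :=
  fun v => [exists i, pos0 i == v].

End Robots.
End Grid.

(* Every robot walks to c, the unique occupied corner of the enclosing square,
   by grid steps that strictly decrease its Manhattan distance to c, stay in the
   square and never land on another corner of it.  Hence the square and c remain
   recognisable in every reachable configuration (c stays occupied, since a robot
   on c never leaves it, crashed or not), so every pending move, however outdated
   its snapshot, is again such a step.  The distance of each robot to c never
   increases and drops at each of its moves away from c, so by fairness every
   non-crashed robot reaches c and stays there. *)

From mathcomp Require Import all_boot zify.
From Stdlib Require Import Classical.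
Set Implicit Arguments. Unset Strict Implicit. Unset Printing Implicit Defensive.

Section Geometry.
Variable n : nat.
Implicit Types (d : nat) (u v p q c : node n) (s : symcode).

Definition dist1 (a b : nat) : nat := (a - b) + (b - a).

Definition manhattan u v : nat := dist1 u.1 v.1 + dist1 u.2 v.2.

Definition is_end d (a : nat) : bool := (a == d) || (a == n.-1 - d).

Lemma node_eqE u v : (u == v) = ((u.1 : nat) == v.1) && ((u.2 : nat) == v.2).
Proof. by case: u v => a b [a' b']. Qed.

Definition step_toward (a b : 'I_n) : 'I_n :=
  insubd a (if a < b then a.+1 else a.-1).

Lemma step_toward_spec d (a b : 'I_n) :
  d <= a -> a <= n.-1 - d -> is_end d b -> a != b ->
  let a' := step_toward a b in
  [/\ (a == a'.+1 :> nat) || (a' == a.+1 :> nat), dist1 a' b < dist1 a b,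
      d <= a' <= n.-1 - d & is_end d a' -> a' = b].
Proof.
have val_step : (step_toward a b : nat) = if a < b then a.+1 else a.-1.
  rewrite /step_toward val_insubd; move: (ltn_ord a) (ltn_ord b) => ? ?.
  by case: (ltnP a b) => ?; rewrite ifT //; lia.
move=> /= la ua eb nab; have {nab} /eqP nab : (a : nat) != b := nab.
rewrite /dist1 /is_end; split.
- rewrite val_step; case: (ltnP a b); lia.
- rewrite val_step; case: (ltnP a b); lia.
- move: eb; rewrite val_step /is_end; case: (ltnP a b); lia.
- move=> ea'; apply: val_inj; move: eb ea'; rewrite /= val_step /is_end.
  case: (ltnP a b); lia.
Qed.

Lemma in_square_lt d v : in_square d v -> d < n.
Proof. by case/and4P=> ? ? _ _; move: (ltn_ord v.1); lia. Qed.

Lemma is_end_le d d' (a : nat) :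
  d <= n.-1 - d -> is_end d a -> d' <= a -> a <= n.-1 - d' -> d' <= d.
Proof. by rewrite /is_end; lia. Qed.

Lemma is_cornerE d v : is_corner d v = is_end d v.1 && is_end d v.2.
Proof. by []. Qed.

Definition safe_step d c p q : bool :=
  [&& adj p q, manhattan q c < manhattan p c, in_square d q & is_corner d q ==> (q == c)].

Lemma safe_step_exists d c p :
  is_corner d c -> in_square d p -> ~~ is_corner d p -> exists q, safe_step d c p q.
Proof.
rewrite !is_cornerE => /andP [e1 e2] /and4P [l1 u1 l2 u2] ncp.
pose qx := (step_toward p.1 c.1, p.2); pose qy := (p.1, step_toward p.2 c.2).
have move_x : p.1 != c.1 ->
    [/\ adj p qx, manhattan qx c < manhattan p c, in_square d qx &
        is_end d qx.1 -> qx.1 = c.1].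
  move=> ne; have [adj1 close1 in1 end1] := step_toward_spec l1 u1 e1 ne.
  split=> //; first by rewrite /adj /= eqxx adj1 orbT.
  + by rewrite /manhattan /= ltn_add2r.
  + by case/andP: in1 => l1' u1'; rewrite /in_square /= l1' u1' l2 u2.
have move_y : p.2 != c.2 ->
    [/\ adj p qy, manhattan qy c < manhattan p c, in_square d qy &
        is_end d qy.2 -> qy.2 = c.2].
  move=> ne; have [adj2 close2 in2 end2] := step_toward_spec l2 u2 e2 ne.
  split=> //; first by rewrite /adj /= eqxx adj2.
  + by rewrite /manhattan /= ltn_add2l.
  + by rewrite /in_square /= l1 u1.
(* Moving the first coordinate can only land on a wrong corner when p.2 is an
   extreme value other than c.2; then p.1 is not extreme (p is not a corner), so
   moving the second coordinate is safe. *)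
have [/andP [ne1 ok2]|bad] := boolP ((p.1 != c.1) && ((p.2 == c.2) || ~~ is_end d p.2)).
  exists qx; rewrite /safe_step; have [-> -> -> end1] := move_x ne1.
  rewrite is_cornerE /=.
  apply/implyP => /andP [/end1 e1' e2']; move: ok2; rewrite e2' orbF => /eqP p2c.
  by apply/eqP; rewrite [c]surjective_pairing -e1' -p2c.
rewrite negb_and negbK negb_or negbK in bad.
have ne2 : p.2 != c.2.
  case/orP: bad => [/eqP e|/andP [] //]; apply/eqP => e'.
  by rewrite e e' e1 e2 in ncp.
exists qy; rewrite /safe_step; have [-> -> -> end2] := move_y ne2; rewrite is_cornerE /=.
apply/implyP => /andP [e1' /end2 e2'].
case/orP: bad => [/eqP e|/andP [_ e2p]]; last by rewrite e1' e2p in ncp.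
by apply/eqP; rewrite [c]surjective_pairing -e -e2'.
Qed.

Lemma manhattan_eq0 u v : manhattan u v = 0 -> u = v.
Proof. by rewrite /manhattan /dist1 => h; apply/eqP; rewrite node_eqE; lia. Qed.

Lemma manhattan_xx v : manhattan v v = 0.
Proof. by rewrite /manhattan /dist1 !subnn. Qed.

Lemma in_square_symf s d v : in_square d (symf s v) = in_square d v.
Proof.
case: s v => [[[] []] []] [a b]; rewrite /in_square /symf /flip /=;
  move: (ltn_ord a) (ltn_ord b); lia.
Qed.

Lemma is_corner_symf s d v : d < n -> is_corner d (symf s v) = is_corner d v.
Proof.
case: s v => [[[] []] []] [a b]; rewrite /is_corner /symf /flip /= => ?;
  move: (ltn_ord a) (ltn_ord b); lia.
Qed.

Lemma adj_symf s u v : adj (symf s u) (symf s v) = adj u v.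
Proof.
case: s u v => [[[] []] []] [a b] [a' b']; rewrite /adj /symf /flip /=;
  move: (ltn_ord a) (ltn_ord b) (ltn_ord a') (ltn_ord b'); lia.
Qed.

Lemma manhattan_symf s u v : manhattan (symf s u) (symf s v) = manhattan u v.
Proof.
case: s u v => [[[] []] []] [a b] [a' b']; rewrite /manhattan /dist1 /symf /flip /=;
  move: (ltn_ord a) (ltn_ord b) (ltn_ord a') (ltn_ord b'); lia.
Qed.

Lemma sym_invK : involutive sym_inv.
Proof. by case=> [[[] ?] ?]. Qed.

Lemma symf_inj s : injective (@symf n s).
Proof. exact: can_inj (symf_invK s). Qed.

Lemma symf_invKV s : cancel (@symf n (sym_inv s)) (symf s).
Proof. by move=> v; rewrite -{1}(sym_invK s) symf_invK. Qed.

Lemma safe_step_symf s d c p q : d < n ->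
  safe_step d (symf s c) (symf s p) (symf s q) = safe_step d c p q.
Proof.
move=> dn; rewrite /safe_step adj_symf !manhattan_symf in_square_symf.
by rewrite is_corner_symf // (inj_eq (@symf_inj s)).
Qed.

End Geometry.

Section Algorithm.
Variable n : nat.
Implicit Types (C : config n) (d : nat) (u v p q c t : node n) (s : symcode).

Definition is_anchor C (x : 'I_n * node n) : bool :=
  [forall v, (C v != 0) ==> in_square x.1 v] && is_corner x.1 x.2 && (C x.2 != 0).

Definition gather_alg : algorithm n := fun C p =>
  if [pick x | is_anchor C x] is Some (d, c) then odflt p [pick q | safe_step d c p q]
  else p.

Definition anchored C d c : Prop :=
  [/\ forall v, C v != 0 -> in_square d v, is_corner d c, C c != 0 &
      forall v, C v != 0 -> is_corner d v -> v = c].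

Definition moves_toward d c p t : bool :=
  if p == c then t == c else safe_step d c p t.

Lemma is_anchor_anchored C d c (d' : 'I_n) c' :
  anchored C d c -> is_anchor C (d', c') -> d' = d :> nat /\ c' = c.
Proof.
move=> [sq cc Cc uniq] /andP [/andP [/forallP sq' cc'] Cc'] /=.
have /and4P [ld ud _ _] := sq _ Cc'; have /and4P [ld' ud' _ _] := implyP (sq' c) Cc.
have dd' : d = d'.
  apply/eqP; rewrite eqn_leq; apply/andP; split.
  - by case/andP: cc' => e _; apply: is_end_le e ld ud; apply: leq_trans ud'.
  - by case/andP: cc => e _; apply: is_end_le e ld' ud'; apply: leq_trans ud.
by split; rewrite // (uniq c') // dd'.
Qed.

Lemma gather_alg_spec C d c p :
  anchored C d c -> C p != 0 -> moves_toward d c p (gather_alg C p).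
Proof.
move=> anc Cp; have [sq cc Cc uniq] := anc; have dn := in_square_lt (sq _ Cc).
rewrite /gather_alg.
case: pickP => [[d' c'] /(is_anchor_anchored anc) [-> ->]|none]; last first.
  have := none (Ordinal dn, c); rewrite /is_anchor /= cc Cc !andbT => /forallP; case.
  by move=> v; apply/implyP/sq.
rewrite /moves_toward; case: eqP => [->|/eqP pc].
  case: pickP => [q /and4P [_]|_ /=]; last by rewrite eqxx.
  by rewrite manhattan_xx.
case: pickP => [//|none].
have [|q /= safe_q] := safe_step_exists cc (sq _ Cp); last by rewrite none in safe_q.
by apply: contra pc => /(uniq _ Cp) ->.
Qed.

Lemma moves_toward_symf s d c p t : d < n ->
  moves_toward d (symf s c) (symf s p) (symf s t) = moves_toward d c p t.
Proof.
by move=> dn; rewrite /moves_toward !(inj_eq (@symf_inj n s)) safe_step_symf.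
Qed.

Lemma anchored_symf C s d c :
  anchored C d c -> anchored (C \o symf s) d (symf (sym_inv s) c).
Proof.
move=> [sq cc Cc uniq]; have dn := in_square_lt (sq _ Cc); split=> [v|||v] /=.
- by move/sq; rewrite in_square_symf.
- by rewrite is_corner_symf.
- by rewrite symf_invKV.
- by rewrite -(is_corner_symf s v dn) => /uniq h /h <-; rewrite symf_invK.
Qed.

Lemma moves_toward_adj d c p t : moves_toward d c p t -> (t == p) || adj p t.
Proof.
rewrite /moves_toward; case: eqP => [-> -> //|_].
by case/and4P => ->; rewrite orbT.
Qed.

Lemma moves_toward_at d c t : moves_toward d c c t -> t = c.
Proof. by rewrite /moves_toward eqxx => /eqP. Qed.

Lemma moves_toward_in_square d c p t :
  in_square d c -> moves_toward d c p t -> in_square d t.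
Proof. by rewrite /moves_toward; case: eqP => [_ ? /eqP ->|_ _ /and4P []]. Qed.

Lemma moves_toward_corner d c p t : moves_toward d c p t -> is_corner d t -> t = c.
Proof.
rewrite /moves_toward; case: eqP => [_ /eqP -> //|_ /and4P [_ _ _ /implyP h]].
by move/h/eqP.
Qed.

Lemma moves_toward_le d c p t : moves_toward d c p t -> manhattan t c <= manhattan p c.
Proof. by rewrite /moves_toward; case: eqP => [-> /eqP ->|_ /and4P [_ /ltnW]]. Qed.

Lemma moves_toward_lt d c p t :
  p != c -> moves_toward d c p t -> manhattan t c < manhattan p c.
Proof. by rewrite /moves_toward => /negbTE ->; case/and4P. Qed.

Lemma target_spec C d c p s :
  anchored C d c -> C p != 0 -> moves_toward d c p (target gather_alg C p s).
Proof.
move=> anc Cp; have [sq _ Cc _] := anc; have dn := in_square_lt (sq _ Cc).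
have Cp' : (C \o symf s) (symf (sym_inv s) p) != 0 by rewrite /= symf_invKV.
have := gather_alg_spec (anchored_symf s anc) Cp'.
rewrite -(moves_toward_symf s _ _ _ dn) !symf_invKV /target => mt.
by rewrite (moves_toward_adj mt).
Qed.

End Algorithm.

Lemma eventually_forall (I : finType) (P : I -> nat -> Prop) :
  (forall i, exists T, forall t, T <= t -> P i t) ->
  exists T, forall t, T <= t -> forall i, P i t.
Proof.
move=> ev; suff [T HT] : exists T, forall i, i \in enum I -> forall t, T <= t -> P i t.
  by exists T => t tT i; apply: HT; rewrite ?mem_enum.
elim: (enum I) => [|i s [T HT]]; first by exists 0.
have [Ti HTi] := ev i; exists (maxn Ti T) => j /predU1P [->|js] t;
  rewrite geq_max => /andP [? ?].
- exact: HTi.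
- exact: HT.
Qed.

Lemma eventually_zero (f : nat -> nat) :
  (forall t, f t.+1 <= f t) ->
  (forall N, exists2 m, N <= m & 0 < f m -> f m.+1 < f m) ->
  exists T, forall t, T <= t -> f t = 0.
Proof.
move=> fS progress.
have mono : {homo f : i j / i <= j >-> j <= i}.
  by apply: homo_leq => [//|y x z xy yz|//]; apply: leq_trans xy.
suff /(_ (f 0) 0 (leqnn _)) :
    forall b N, f N <= b -> exists T, forall t, T <= t -> f t = 0 by [].
elim=> [|b IH] N fN.
  by exists N => t /mono ft; apply/eqP; rewrite -leqn0 (leq_trans ft fN).
have [m Nm dec] := progress N; have [fm0|fm_pos] := posnP (f m).
  by exists m => t /mono ft; apply/eqP; rewrite -leqn0 -fm0.
apply: (IH m.+1); rewrite -ltnS; apply: leq_trans (dec fm_pos) _.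
exact: leq_trans (mono _ _ Nm) fN.
Qed.

Section Dynamics.
Variables (n k : nat) (A : algorithm n).
Variables (pos0 : robot k -> node n) (sched : nat -> event k).
Implicit Types (st : state n k) (e : event k) (i : robot k).
Local Notation run_at t := (run A pos0 sched t).

Lemma alive_step st e i : alive (step A st e) i -> alive st i.
Proof.
case: e => [j s|j|j] /=; first by case: ifP.
  by case: ifP => //; case: (pend st j).
by case: eqP => // e _; rewrite /alive e.
Qed.

Lemma alive_run t t' i : t <= t' -> alive (run_at t') i -> alive (run_at t) i.
Proof.
apply: (homo_leq (r := fun st st' => alive st' i -> alive st i)) => // [y x z xy yz|t0].
- by move/yz/xy.
- exact: alive_step.
Qed.

Lemma pos_run_step t i :
  pos (run_at t.+1) i = pos (run_at t) i \/ pend (run_at t) i = Some (pos (run_at t.+1) i).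
Proof.
rewrite /=; set st := run_at t.
case: (sched t) => [j s|j|j] /=; [by case: ifP; left | | by case: ifP; left].
case: ifP => _; last by left.
case E: (pend st j) => [p|]; last by left.
by rewrite /= /upd; case: eqP => [->|]; [right | left].
Qed.

Lemma pos_run_move t i p :
  sched t = Move i -> alive (run_at t) i -> pend (run_at t) i = Some p ->
  pos (run_at t.+1) i = p.
Proof. by move=> Et al Ep; rewrite /= Et /= al Ep /= /upd eqxx. Qed.

End Dynamics.

Lemma cfg_of_neq0 n k (p : robot k -> node n) v : (cfg_of p v != 0) = occupied p v.
Proof.
rewrite /cfg_of -lt0n leq_min andbT; apply/card_gt0P/existsP => -[i].
- by rewrite inE; exists i.
- by exists i; rewrite inE.
Qed.

Section Invariant.
Variables (n k d : nat) (c : node n).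
Hypothesis corner_c : is_corner d c.
Implicit Types (st : state n k) (i : robot k).

Definition gather_inv st : Prop :=
  [/\ forall i, in_square d (pos st i),
      forall i, is_corner d (pos st i) -> pos st i = c,
      exists i, pos st i = c &
      forall i t, pend st i = Some t -> moves_toward d c (pos st i) t].

Lemma gather_inv_anchored st : gather_inv st -> anchored (cfg_of (pos st)) d c.
Proof.
case=> sq corner_pos [j at_c] _; split=> // [v||v].
- by rewrite cfg_of_neq0 => /existsP [i /eqP <-].
- by rewrite cfg_of_neq0; apply/existsP; exists j; rewrite at_c.
- by rewrite cfg_of_neq0 => /existsP [i /eqP <-] /corner_pos.
Qed.

Lemma gather_inv_step st e : gather_inv st -> gather_inv (step (@gather_alg n) st e).
Proof.
move=> inv; have anc := gather_inv_anchored inv.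
case: (inv) => sq corner_pos [j at_c] pend_ok.
case: e => [i s|i|i] /=.
- case: ifP => _ //; split=> //; first by exists j.
  move=> i' t /=; rewrite /upd; case: eqP => [-> [<-]|_]; last exact: pend_ok.
  by apply: target_spec anc _; rewrite cfg_of_neq0; apply/existsP; exists i.
- case: ifP => _ //; case E: (pend st i) => [t|] //.
  have mt := pend_ok _ _ E; have sq_c : in_square d c by rewrite -at_c.
  split=> /= [i'|i'||i' t']; rewrite /upd.
  + by case: eqP => _; [apply: moves_toward_in_square mt | apply: sq].
  + by case: eqP => _; [apply: moves_toward_corner mt | apply: corner_pos].
  + have [ji|ji] := eqVneq j i.
      by exists i; rewrite eqxx; apply: (moves_toward_at (d := d)); rewrite -{2}at_c ji.
    by exists j; rewrite (negbTE ji).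
  + by case: eqP => // _; apply: pend_ok.
- by case: ifP => _ //; split=> //; exists j.
Qed.

Variables (pos0 : robot k -> node n) (sched : nat -> event k).
Hypothesis inv0 : gather_inv (State pos0 (fun _ => None) None).
Local Notation run_at t := (run (@gather_alg n) pos0 sched t).

Lemma gather_inv_run t : gather_inv (run_at t).
Proof. by elim: t => //= t IH; apply: gather_inv_step. Qed.

Lemma manhattan_run_step i t :
  manhattan (pos (run_at t.+1) i) c <= manhattan (pos (run_at t) i) c.
Proof.
have [-> //|E] := pos_run_step (@gather_alg n) pos0 sched t i.
by have [_ _ _ pend_ok] := gather_inv_run t; apply: moves_toward_le (pend_ok _ _ E).
Qed.

Lemma manhattan_run_move i t :
  sched t = Move i -> alive (run_at t) i -> pend (run_at t) i <> None ->
  0 < manhattan (pos (run_at t) i) c ->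
  manhattan (pos (run_at t.+1) i) c < manhattan (pos (run_at t) i) c.
Proof.
move=> Et al; case E: (pend _ i) => [p|] // _ away.
rewrite (pos_run_move Et al E).
have [_ _ _ pend_ok] := gather_inv_run t; apply: moves_toward_lt (pend_ok _ _ E).
by apply: contraTneq away => ->; rewrite manhattan_xx.
Qed.

Lemma eventually_at_corner i : fair (@gather_alg n) pos0 sched ->
  exists T, forall t, T <= t -> alive (run_at t) i -> pos (run_at t) i = c.
Proof.
move=> fr; have [always|] := classic (forall t, alive (run_at t) i); last first.
  by case/not_all_ex_not => t0 dead; exists t0 => t t0t /(alive_run t0t).
have [|T HT] := eventually_zero (manhattan_run_step i).
  move=> N; have [m [Nm [Em pm]]] := fr i always N.
  by exists m => //; apply: manhattan_run_move.
by exists T => t /HT /manhattan_eq0.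
Qed.

Lemma gathers_of_inv :
  fair (@gather_alg n) pos0 sched -> gathers (@gather_alg n) pos0 sched.
Proof.
move=> fr; have [T HT] := eventually_forall (fun i => eventually_at_corner i fr).
by exists T, c => t /HT.
Qed.

End Invariant.

Theorem theorem4 (n k : nat) (pos0 : 'I_k -> node n) :
  ~~ odd n -> 3 <= k -> injective pos0 ->
  (exists d, is_MES (occupied pos0) d /\
             #|[pred v : node n | is_corner d v && occupied pos0 v]| = 1) ->
  gatherable_1crash pos0.
Proof.
move=> _ _ _ [d [[enc _] /mem_card1 [c one_c]]].
have /andP [cc occ_c] : is_corner d c && occupied pos0 c by have := one_c c; rewrite !inE eqxx.
have inv0 : gather_inv d c (State pos0 (fun _ => None) None).
  split=> //= [i|i ci|].
  - by apply: enc; apply/existsP; exists i.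
  - by apply/eqP; rewrite -[_ == _]one_c !inE ci; apply/existsP; exists i.
  - by case/existsP: occ_c => i /eqP; exists i.
by exists (@gather_alg n) => sched; apply: (gathers_of_inv (c := c) cc inv0).
Qed.
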